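(* Let $n\ge 4$, $N=\{1,\dots,n\}$, fix distinct $i_1,i_2\in N$ and let $\hat N^c=N\setminus\{i_1,i_2\}$. Then the inequality $$x_{i_2i_1}+\sum_{j\in\hat N^c}\left(x_{i_1j}+x_{ji_2}\right)-x_{i_1i_2}-\sum_{j,j'\in\hat N^c:\,j\ne j'} x_{jj'}\le 2-\frac{(n-4)(n-5)}{2}$$ is a valid inequality for the weak order polytope $P^n_{WO}$, i.e. it holds for every point $x\in P^n_{WO}$.
   Context: Let $N=\{1,\dots,n\}$ and $A_N=\{(i,j): i,j\in N, i\ne j\}$. A weak order on $N$ is a binary relation $W\subseteq N\times N$ that is reflexive, transitive and total; $(i,j)\in W$ is read ''$i$ is preferred over or tied with $j$''. The characteristic vector of $W$ is $x^W\in\{0,1\}^{A_N}$ with $x^W_{(i,j)}=1$ if $(i,j)\in W$ and $0$ otherwise. The weak order polytope $P^n_{WO}$ is the convex hull of the characteristic vectors of all weak orders on $N$; its points are vectors $x\in\mathbb{R}^{A_N}$ and $x_{ij}$ denotes the coordinate $x_{(i,j)}$. *)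

From HB Require Import structures.
From mathcomp Require Import all_boot all_order all_algebra.
Set Implicit Arguments. Unset Strict Implicit. Unset Printing Implicit Defensive.
Import Order.TTheory GRing.Theory Num.Theory.
Local Open Scope ring_scope.

(* N = {1,..,n} is represented by 'I_n.  A binary relation on N is a
   boolean function on pairs. *)
Definition relN (n : nat) := {ffun 'I_n * 'I_n -> bool}.

Definition weak_order (n : nat) (W : relN n) : bool :=
  [&& [forall i, W (i, i)],
      [forall i, forall j, forall k, W (i, j) ==> W (j, k) ==> W (i, k)]
    & [forall i, forall j, W (i, j) || W (j, i)]].

(* Characteristic vector of W, coordinate (i,j) (only used for i <> j). *)
Definition char_vec (R : pzSemiRingType) (n : nat) (W : relN n) (i j : 'I_n) : R :=
  (W (i, j))%:R.

(* A point x of R^{A_N} is given by its coordinates x i j for i <> j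
   (diagonal values of the function are irrelevant).  x lies in the weak
   order polytope iff it is a convex combination of the characteristic
   vectors of the (finitely many) weak orders on N. *)
Definition in_PWO (R : realFieldType) (n : nat) (x : 'I_n -> 'I_n -> R) : Prop :=
  exists lam : relN n -> R,
    (forall W, weak_order W -> 0 <= lam W) /\
    \sum_(W | weak_order W) lam W = 1 /\
    (forall i j : 'I_n, i != j ->
       x i j = \sum_(W | weak_order W) lam W * char_vec R W i j).

From HB Require Import structures.
From mathcomp Require Import all_boot all_order all_algebra.
From mathcomp Require Import lra zify.
Set Implicit Arguments. Unset Strict Implicit. Unset Printing Implicit Defensive.
Import Order.TTheory GRing.Theory Num.Theory.
Local Open Scope ring_scope.

(* The left-hand side is linear and a point of the polytope is a convex
   combination of characteristic vectors of weak orders, so it suffices to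
   check weak orders.  Put m = n - 2; the right-hand side equals
   2m - 1 - m(m-1)/2.  By totality every ordered pair of distinct j, j' in the
   complement contributes at least 1 to x_jj' + x_j'j, so the clique sum is at
   least m(m-1)/2, and each path term x_(i1 j) + x_(j i2) is at most 2.  One
   unit of slack remains to be found: if i1 is strictly above i2 then
   x_(i2 i1) - x_(i1 i2) = -1; if i2 is strictly above i1, transitivity caps
   every path term at 1; if they are tied, either some path term is at most 1,
   or every j lies between i1 and i2, so the whole complement is tied and the
   clique sum is m(m-1). *)

Lemma card_neq_and (T : finType) (a : T) (P : pred T) : P a ->
  #|[pred x | (x != a) && P x]| = #|P|.-1.
Proof.
move=> Pa; rewrite [#|P|](cardD1 a) [a \in P]Pa.
by apply: eq_card => x; rewrite !inE.
Qed.

Lemma card_neq2 (T : finType) (a b : T) : a != b ->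
  #|[pred x | (x != a) && (x != b)]| = (#|T| - 2)%N.
Proof.
by move=> ab; rewrite (card_neq_and (P := predC1 b)) // cardC1; lia.
Qed.

Lemma card_neq3 (T : finType) (a b c : T) : a != b -> c != a -> c != b ->
  #|[pred x | [&& x != a, x != b & x != c]]| = (#|T| - 3)%N.
Proof.
move=> ab ca cb.
rewrite (card_neq_and (P := [pred x | (x != b) && (x != c)])) /=; last first.
  by rewrite ab eq_sym.
by rewrite card_neq2 1?eq_sym // -subn1 -subnDA.
Qed.

Section WeakOrder.
Variables (n : nat) (W : relN n).
Hypothesis hW : weak_order W.

Lemma weak_order_trans i j k : W (i, j) -> W (j, k) -> W (i, k).
Proof.
by case/and3P: hW => _ /forallP/(_ i)/forallP/(_ j)/forallP/(_ k)/implyP h _ /h/implyP.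
Qed.

Lemma weak_order_total i j : W (i, j) || W (j, i).
Proof. by case/and3P: hW => _ _ /forallP/(_ i)/forallP. Qed.

End WeakOrder.

Lemma ineq_rhsE (R : realFieldType) (n : nat) : (4 <= n)%N ->
  2 - ((n - 4) * (n - 5))%:R / 2 = 2 * (n - 2)%:R - 1 - ((n - 2) * (n - 3))%:R / 2 :> R.
Proof.
move=> n4.
have nat_eq : ((n - 4) * (n - 5) + 4 * (n - 2) = (n - 2) * (n - 3) + 6)%N.
  by case: n n4 => [|[|[|[|[|k]]]]] // _; rewrite !subSS subn0; nia.
move/(congr1 (GRing.natmul (1 : R))): nat_eq; rewrite !natrD natrM.
lra.
Qed.

Section Inequality.
Variables (R : realFieldType) (n : nat) (i1 i2 : 'I_n).

Definition path_sum (y : 'I_n -> 'I_n -> R) : R :=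
  \sum_(j : 'I_n | (j != i1) && (j != i2)) (y i1 j + y j i2).

Definition clique_sum (y : 'I_n -> 'I_n -> R) : R :=
  \sum_(j : 'I_n | (j != i1) && (j != i2))
    \sum_(j' : 'I_n | [&& j' != i1, j' != i2 & j' != j]) y j j'.

Definition ineq_lhs (y : 'I_n -> 'I_n -> R) : R :=
  y i2 i1 + path_sum y - y i1 i2 - clique_sum y.

Lemma ineq_lhs_lincomb (I : finType) (P : pred I) (c : I -> R)
    (y : I -> 'I_n -> 'I_n -> R) :
  ineq_lhs (fun i j => \sum_(k | P k) c k * y k i j)
  = \sum_(k | P k) c k * ineq_lhs (y k).
Proof.
have path_lin : path_sum (fun i j => \sum_(k | P k) c k * y k i j)
                = \sum_(k | P k) c k * path_sum (y k).
  rewrite /path_sum; under eq_bigr => j _ do rewrite -big_split.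
  rewrite exchange_big; apply: eq_bigr => k _.
  by rewrite mulr_sumr; apply: eq_bigr => j _; rewrite mulrDr.
have clique_lin : clique_sum (fun i j => \sum_(k | P k) c k * y k i j)
                  = \sum_(k | P k) c k * clique_sum (y k).
  rewrite /clique_sum.
  under eq_bigr => j _ do rewrite exchange_big.
  rewrite exchange_big; apply: eq_bigr => k _.
  by rewrite mulr_sumr; apply: eq_bigr => j _; rewrite mulr_sumr.
rewrite /ineq_lhs path_lin clique_lin -!big_split -!sumrB /=.
by apply: eq_bigr => k _; rewrite !mulrBr mulrDr.
Qed.

Hypothesis i12 : i1 != i2.

Lemma eq_ineq_lhs (y z : 'I_n -> 'I_n -> R) :
  (forall i j, i != j -> y i j = z i j) -> ineq_lhs y = ineq_lhs z.
Proof.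
move=> yz; rewrite /ineq_lhs /path_sum /clique_sum yz 1?eq_sym // yz //.
congr (_ + _ - _ - _).
  by apply: eq_bigr => j /andP[j1 j2]; rewrite yz 1?eq_sym // yz.
apply: eq_bigr => j _; apply: eq_bigr => j' /and3P[_ _ j'j].
by rewrite yz // eq_sym.
Qed.

Lemma ineq_lhs_le_PWO (b : R) (x : 'I_n -> 'I_n -> R) :
  (forall W, weak_order W -> ineq_lhs (char_vec R W) <= b) ->
  in_PWO x -> ineq_lhs x <= b.
Proof.
move=> vertex_le [lam [lam_ge0 [lam_sum1 x_comb]]].
rewrite (eq_ineq_lhs x_comb) ineq_lhs_lincomb.
rewrite -[b]mul1r -lam_sum1 mulr_suml.
by apply: ler_sum => W hW; rewrite ler_wpM2l ?lam_ge0 ?vertex_le.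
Qed.

Lemma clique_sum_swap (y : 'I_n -> 'I_n -> R) :
  clique_sum (fun j j' => y j' j) = clique_sum y.
Proof.
rewrite /clique_sum (exchange_big_dep (fun j => (j != i1) && (j != i2))) /=.
  apply: eq_bigr => j /andP[j1 j2]; apply: eq_bigl => j'.
  by rewrite j1 j2 (eq_sym j) -andbA.
by move=> j j' _ /and3P[-> -> _].
Qed.

Lemma clique_sum_const (c : R) :
  clique_sum (fun _ _ => c) = c * ((n - 2) * (n - 3))%:R.
Proof.
rewrite /clique_sum (eq_bigr (fun _ => c *+ (n - 3))); last first.
  by move=> j /andP[j1 j2]; rewrite sumr_const card_neq3 // (card_ord n).
by rewrite sumr_const card_neq2 // (card_ord n) -mulrnA mulr_natr mulnC.
Qed.

Lemma path_sum_le (y : 'I_n -> 'I_n -> R) (c : R) :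
  (forall j, j != i1 -> j != i2 -> y i1 j + y j i2 <= c) ->
  path_sum y <= c * (n - 2)%:R.
Proof.
move=> y_le; apply: (@le_trans _ _ (\sum_(j : 'I_n | (j != i1) && (j != i2)) c)).
  by apply: ler_sum => j /andP[j1 j2]; apply: y_le.
by rewrite sumr_const card_neq2 // (card_ord n) mulr_natr.
Qed.

Section Vertex.
Variable W : relN n.
Hypothesis hW : weak_order W.
Local Notation chi := (char_vec R W).

Lemma clique_sum_char_ge : ((n - 2) * (n - 3))%:R <= 2 * clique_sum chi.
Proof.
rewrite -[X in X <= _]mul1r -clique_sum_const mulr_natl mulr2n.
rewrite -[X in _ + X](clique_sum_swap chi) /clique_sum -big_split /=.
apply: ler_sum => j _; rewrite -big_split /=; apply: ler_sum => j' _.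
rewrite /char_vec -natrD ler1n.
by case/orP: (weak_order_total hW j j') => ->; rewrite ?addnS.
Qed.

Lemma clique_sum_char_tied :
  W (i2, i1) -> (forall j, j != i1 -> j != i2 -> W (i1, j) && W (j, i2)) ->
  clique_sum chi = ((n - 2) * (n - 3))%:R.
Proof.
move=> i2_i1 between; rewrite -[RHS]mul1r -clique_sum_const.
apply: eq_bigr => j /andP[j1 j2]; apply: eq_bigr => j' /and3P[j'1 j'2 _].
case/andP: (between j j1 j2) => _ j_i2; case/andP: (between j' j'1 j'2) => i1_j' _.
by rewrite /char_vec (weak_order_trans hW (weak_order_trans hW j_i2 i2_i1) i1_j').
Qed.

Lemma path_sum_char_le2 : path_sum chi <= 2 * (n - 2)%:R.
Proof.
apply: path_sum_le => j _ _.
by rewrite /char_vec; case: (W _); case: (W _) => /=; lra.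
Qed.

Lemma path_sum_char_le1 : ~~ W (i1, i2) -> path_sum chi <= (n - 2)%:R.
Proof.
move=> not12; rewrite -[X in _ <= X]mul1r; apply: path_sum_le => j _ _.
rewrite /char_vec; case E1: (W (i1, j)); case E2: (W (j, i2)) => /=; try lra.
by move: not12; rewrite (weak_order_trans hW E1 E2).
Qed.

Lemma path_sum_char_lt2 j0 : j0 != i1 -> j0 != i2 -> ~~ (W (i1, j0) && W (j0, i2)) ->
  path_sum chi <= 2 * (n - 2)%:R - 1.
Proof.
move=> j01 j02 not_between.
have gap : 1 <= \sum_(j : 'I_n | (j != i1) && (j != i2)) (2 - (chi i1 j + chi j i2)).
  rewrite (bigD1 j0) /=; last by rewrite j01 j02.
  rewrite -[X in X <= _]addr0; apply: lerD.
    by move: not_between; rewrite /char_vec; case: (W _); case: (W _) => //= _; lra.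
  by apply: sumr_ge0 => j _; rewrite /char_vec; case: (W _); case: (W _) => /=; lra.
move: gap; rewrite sumrB sumr_const card_neq2 // (card_ord n) -/(path_sum chi).
rewrite -mulr_natr; lra.
Qed.

Hypothesis n4 : (4 <= n)%N.

Lemma ineq_lhs_char_vec_le : ineq_lhs chi <= 2 - ((n - 4) * (n - 5))%:R / 2.
Proof.
have m2 : 2 <= (n - 2)%:R :> R by rewrite ler_nat; lia.
have P2 : 2 <= ((n - 2) * (n - 3))%:R :> R by rewrite ler_nat; nia.
have := clique_sum_char_ge; have := path_sum_char_le2.
rewrite ineq_rhsE // /ineq_lhs.
case E21: (W (i2, i1)); case E12: (W (i1, i2)).
- case: (boolP [exists j, [&& j != i1, j != i2 & ~~ (W (i1, j) && W (j, i2))]]).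
    case/existsP=> j0 /and3P[j01 j02 not_between].
    have := path_sum_char_lt2 j01 j02 not_between.
    by rewrite /char_vec E21 E12 /=; lra.
  rewrite negb_exists => /forallP none_outside.
  have between j : j != i1 -> j != i2 -> W (i1, j) && W (j, i2).
    by move=> j1 j2; have := none_outside j; rewrite j1 j2 /= negbK.
  rewrite clique_sum_char_tied //.
  by rewrite /char_vec E21 E12 /=; lra.
- have := path_sum_char_le1 (negbT E12).
  by rewrite /char_vec E21 E12 /=; lra.
- by rewrite /char_vec E21 E12 /=; lra.
- by move: (weak_order_total hW i1 i2); rewrite E12 E21.
Qed.

End Vertex.

End Inequality.

Theorem mainTheorem2 (R : realFieldType) (n : nat) (i1 i2 : 'I_n)
    (x : 'I_n -> 'I_n -> R) :
  (4 <= n)%N -> i1 != i2 -> in_PWO x ->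
  x i2 i1
  + \sum_(j : 'I_n | (j != i1) && (j != i2)) (x i1 j + x j i2)
  - x i1 i2
  - \sum_(j : 'I_n | (j != i1) && (j != i2))
      \sum_(j' : 'I_n | [&& j' != i1, j' != i2 & j' != j]) x j j'
  <= 2 - ((n - 4) * (n - 5))%:R / 2.
Proof.
move=> n4 i12 x_in_PWO.
apply: (ineq_lhs_le_PWO i12 _ x_in_PWO) => W hW.
exact: ineq_lhs_char_vec_le.
Qed.
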